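(* There exist a ranked alphabet $\Sigma$ and a $(\Sigma,\mathrm{TSR})$-wta $\mathcal{A}$ such that $[\![\mathcal{A}]\!]^{\mathrm{init}}$ is i-recognizable by a crisp-deterministic $(\Sigma,\mathrm{TSR})$-wta and $\mathcal{N}(\mathcal{A})$ is not finite.
   Context: $\mathrm{TSR}=(\mathbb{N}\cup\{\infty\},\min,+,\infty,0)$ is the tropical semiring (addition $\min$ with neutral element $\infty$, multiplication $+$ with neutral element $0$). A ranked alphabet $\Sigma$ is a finite set of symbols with ranks, $\Sigma^{(k)}$ the symbols of rank $k$, $\Sigma^{(0)}\ne\emptyset$; $T_\Sigma$ is the set of trees. A $(\Sigma,B)$-wta over a strong bimonoid $(B,\oplus,\otimes,\mathbb{0},\mathbb{1})$ is $\mathcal{A}=(Q,\delta,F)$: $Q$ finite nonempty, $\delta_k:Q^k\times\Sigma^{(k)}\times Q\to B$, $F:Q\to B$. Vector algebra $\mathrm{V}(\mathcal{A})=(B^Q,\delta_{\mathcal{A}})$, $\delta_{\mathcal{A}}(\sigma)(v_1,\dots,v_k)_q=\bigoplus_{q_1,\dots,q_k}\big(\bigotimes_{i=1}^k(v_i)_{q_i}\big)\otimes\delta_k(q_1\dots q_k,\sigma,q)$; $h_{\mathrm{V}(\mathcal{A})}:T_\Sigma\to B^Q$ the unique homomorphism; $[\![\mathcal{A}]\!]^{\mathrm{init}}(\xi)=\bigoplus_q h_{\mathrm{V}(\mathcal{A})}(\xi)_q\otimes F_q$; a weighted tree language $r$ is i-recognizable by $\mathcal{A}$ if $r=[\![\mathcal{A}]\!]^{\mathrm{init}}$.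 Crisp-deterministic: for all $k,\sigma\in\Sigma^{(k)},q_1,\dots,q_k$ a unique $q$ with $\delta_k(q_1\dots q_k,\sigma,q)=\mathbb{1}$ and all other values $\mathbb{0}$. The Nerode algebra $\mathcal{N}(\mathcal{A})$ has as carrier the smallest subset of $B^Q$ closed under all operations $\delta_{\mathcal{A}}(\sigma)$ (equivalently $\mathrm{im}(h_{\mathrm{V}(\mathcal{A})})$), with restricted operations and root weights $v\mapsto\bigoplus_q v_q\otimes F_q$; it is finite if this carrier is finite. *)

From mathcomp Require Import all_boot.
Set Implicit Arguments. Unset Strict Implicit. Unset Printing Implicit Defensive.

(* Tropical semiring TSR = (N ∪ {∞}, min, +, ∞, 0);  carrier: option nat,
   with [None] = ∞ and [Some n] = n. *)
Definition tnat := option nat.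
Definition Inf : tnat := None.
Definition Fin (n : nat) : tnat := Some n.

Definition tmin (a b : tnat) : tnat :=
  match a, b with
  | None, _ => b
  | _, None => a
  | Some x, Some y => Some (minn x y)
  end.

Definition tplus (a b : tnat) : tnat :=
  match a, b with
  | Some x, Some y => Some (x + y)
  | _, _ => None
  end.

Inductive tree (S : finType) (rk : S -> nat) : Type :=
  | Node (s : S) of ('I_(rk s) -> tree rk).

(* A ranked alphabet: S finite, rank function rk, Σ^(0) nonempty. *)
Definition ranked_alphabet (S : finType) (rk : S -> nat) : Prop :=
  exists s : S, rk s = 0.

(* A (Σ,TSR)-wta with state set Q is given by
   delta : forall s, Q^(rk s) -> Q -> tnat   (δ_k(q1..qk, σ, q))
   F : Q -> tnat                              (root weights),
   with Q finite and nonempty. *)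
Section WTA.
Variables (S : finType) (rk : S -> nat) (Q : finType).
Variable delta : forall s : S, {ffun 'I_(rk s) -> Q} -> Q -> tnat.
Variable F : Q -> tnat.

Definition vop (s : S) (vs : 'I_(rk s) -> {ffun Q -> tnat}) : {ffun Q -> tnat} :=
  [ffun q => \big[tmin/Inf]_(w : {ffun 'I_(rk s) -> Q})
               tplus (\big[tplus/Fin 0]_(i < rk s) vs i (w i)) (delta w q)].

Fixpoint hV (t : tree rk) : {ffun Q -> tnat} :=
  match t with
  | Node s ts => vop (fun i => hV (ts i))
  end.

Definition sem_init (t : tree rk) : tnat :=
  \big[tmin/Inf]_(q : Q) tplus (hV t q) (F q).

Definition crisp_deterministic : Prop :=
  forall (s : S) (w : {ffun 'I_(rk s) -> Q}),
    exists q : Q, delta w q = Fin 0 /\ forall q' : Q, q' <> q -> delta w q' = Inf.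

(* the Nerode algebra N(A) is finite: its carrier im(h_V(A)) is finite *)
Definition nerode_finite : Prop :=
  exists l : seq {ffun Q -> tnat}, forall t : tree rk, hV t \in l.
End WTA.

From mathcomp Require Import all_boot.
From HB Require Import structures.
Set Implicit Arguments. Unset Strict Implicit. Unset Printing Implicit Defensive.

(* Over the alphabet {γ/1, α/0} take two states: a state [false] that accepts
   every tree with weight 0 and has root weight 0, and a state [true] whose
   transitions cost 1 per γ and which has root weight ∞.  The second state is
   invisible in [[A]]^init, which is the constant 0 and hence computed by the
   one-state crisp-deterministic wta with root weight 0; but it records the
   height n in h_V(A)(γ^n(α)), so these vectors are pairwise distinct. *)

Lemma tminA : associative tmin.
Proof. by case=> [x|] [y|] [z|] //=; rewrite minnA. Qed.
Lemma tminC : commutative tmin.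
Proof. by case=> [x|] [y|] //=; rewrite minnC. Qed.
Lemma tmin1m : left_id Inf tmin. Proof. by case. Qed.
HB.instance Definition _ := Monoid.isComLaw.Build tnat Inf tmin tminA tminC tmin1m.

Lemma tplusA : associative tplus.
Proof. by case=> [x|] [y|] [z|] //=; rewrite addnA. Qed.
Lemma tplusC : commutative tplus.
Proof. by case=> [x|] [y|] //=; rewrite addnC. Qed.
Lemma tplus1m : left_id (Fin 0) tplus. Proof. by case. Qed.
HB.instance Definition _ := Monoid.isComLaw.Build tnat (Fin 0) tplus tplusA tplusC tplus1m.

Lemma tmin0m : left_zero (Fin 0) tmin. Proof. by case=> // y; rewrite /= min0n. Qed.
Lemma tplusmInf : right_zero Inf tplus. Proof. by case. Qed.

Lemma big_tmin_0 (I : finType) (f : I -> tnat) (j : I) :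
  f j = Fin 0 -> \big[tmin/Inf]_i f i = Fin 0.
Proof. by move=> fj0; rewrite (bigD1 j) //= fj0 tmin0m. Qed.

Lemma big_tmin_only (I : finType) (f : I -> tnat) (j : I) :
  (forall i, i != j -> f i = Inf) -> \big[tmin/Inf]_i f i = f j.
Proof. by move=> fInf; rewrite (bigD1 j) //= big1 // tminC. Qed.

Section ZeroLoop.
Variables (S : finType) (rk : S -> nat) (Q : finType).
Variable delta : forall s : S, {ffun 'I_(rk s) -> Q} -> Q -> tnat.
Variable F : Q -> tnat.
Variable z : Q.
Hypothesis delta_loop0 : forall s : S, @delta s [ffun=> z] z = Fin 0.

Lemma hV_loop0 (t : tree rk) : hV delta t z = Fin 0.
Proof.
elim: t => s ts IH; rewrite /= /vop ffunE (big_tmin_0 (j := [ffun=> z])) //.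
by rewrite delta_loop0 big1 // => i _; rewrite ffunE IH.
Qed.

Lemma sem_init_loop0 (t : tree rk) : F z = Fin 0 -> sem_init delta F t = Fin 0.
Proof. by move=> Fz0; rewrite /sem_init (big_tmin_0 (j := z)) // hV_loop0 Fz0. Qed.

End ZeroLoop.

Lemma hV_inj_not_nerode_finite (S : finType) (rk : S -> nat) (Q : finType)
    (delta : forall s : S, {ffun 'I_(rk s) -> Q} -> Q -> tnat) (t : nat -> tree rk) :
  injective (fun n => hV delta (t n)) -> ~ nerode_finite delta.
Proof.
move=> hV_inj [l hV_in_l].
have uniq_vals : uniq [seq hV delta (t n) | n <- iota 0 (size l).+1].
  by rewrite map_inj_uniq ?iota_uniq.
have /uniq_leq_size : {subset [seq hV delta (t n) | n <- iota 0 (size l).+1] <= l}.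
  by move=> _ /mapP [n _ ->].
by move/(_ uniq_vals); rewrite size_map size_iota ltnn.
Qed.

(* [true] is γ (rank 1) and [false] is α (rank 0). *)
Definition rk_gamma_alpha (b : bool) : nat := if b then 1 else 0.

Definition alpha : tree rk_gamma_alpha :=
  @Node _ rk_gamma_alpha false (fun i => False_rect _ (notF (ltn_ord i))).

Definition gamma (t : tree rk_gamma_alpha) : tree rk_gamma_alpha :=
  @Node _ rk_gamma_alpha true (fun _ => t).

Definition count_delta (s : bool) (w : {ffun 'I_(rk_gamma_alpha s) -> bool}) (q : bool) : tnat :=
  if [forall i, w i == q] then Fin (if q then rk_gamma_alpha s else 0) else Inf.

Definition count_final (q : bool) : tnat := if q then Inf else Fin 0.

Lemma count_delta_const s q : @count_delta s [ffun=> q] q = Fin (if q then rk_gamma_alpha s else 0).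
Proof. by rewrite /count_delta; case: forallP => // -[] i; rewrite ffunE. Qed.

Lemma hV_count_alpha : hV count_delta alpha true = Fin 0.
Proof.
rewrite /= /vop ffunE (big_tmin_0 (j := [ffun=> true])) //.
by rewrite count_delta_const big_ord0.
Qed.

Lemma hV_count_gamma t : hV count_delta (gamma t) true = tplus (hV count_delta t true) (Fin 1).
Proof.
rewrite /= /vop ffunE (big_tmin_only (j := [ffun=> true])).
  by rewrite count_delta_const big_ord1 ffunE.
move=> w w_not_true; rewrite /count_delta ifF ?tplusmInf //.
apply: contraNF w_not_true => /forallP w_true.
by apply/eqP/ffunP => i; rewrite ffunE; apply/eqP.
Qed.

Lemma hV_count_gamma_iter n : hV count_delta (iter n gamma alpha) true = Fin n.
Proof.
elim: n => [|n IH]; first exact: hV_count_alpha.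
by rewrite iterS hV_count_gamma IH /= addn1.
Qed.

Theorem lemma6p6 :
  exists (S : finType) (rk : S -> nat),
    ranked_alphabet rk /\
    exists (Q : finType) (q0 : Q)
           (delta : forall s : S, {ffun 'I_(rk s) -> Q} -> Q -> tnat)
           (F : Q -> tnat),
      (exists (Q' : finType) (q0' : Q')
              (delta' : forall s : S, {ffun 'I_(rk s) -> Q'} -> Q' -> tnat)
              (F' : Q' -> tnat),
          crisp_deterministic delta' /\
          forall t : tree rk, sem_init delta F t = sem_init delta' F' t)
      /\ ~ nerode_finite delta.
Proof.
exists bool, rk_gamma_alpha; split; first by exists false.
exists bool, true, count_delta, count_final; split.
  exists unit, tt, (fun s w q => Fin 0), (fun q => Fin 0); split.
    by move=> s w; exists tt; split => // -[].
  move=> t; rewrite (sem_init_loop0 (z := false)) ?(sem_init_loop0 (z := tt)) //.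
  by move=> s; rewrite count_delta_const.
apply: (hV_inj_not_nerode_finite (t := fun n => iter n gamma alpha)) => m n eq_hV.
by have := congr1 (fun v : {ffun bool -> tnat} => v true) eq_hV; rewrite !hV_count_gamma_iter => -[].
Qed.
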